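(* Let $P:H_0(\tilde S_N)\to\operatorname{NDPF}^{(1)}_N$ be the monoid morphism with $P(\pi_i)=f_i$ for $i\in\{0,\dots,N-1\}$. For every $g\in \operatorname{NDPF}^{(1)}_N$, the fiber $\{w\in\tilde S_N: P(\pi_w)=g\}$ contains a unique $[321]$-avoiding affine permutation.
   Context: $\tilde S_N$ is the group of bijections $\sigma:\mathbb{Z}\to\mathbb{Z}$ with $\sigma(i+N)=\sigma(i)+N$ and $\sum_{i=1}^N\sigma(i)=\binom{N+1}{2}$, generated by $s_0,\dots,s_{N-1}$ where $s_i$ exchanges $j,j+1$ for all $j\equiv i\pmod N$ (indices mod $N$). $H_0(\tilde S_N)$ is generated by $\pi_i$, $i\in\mathbb{Z}/N$, with $\pi_i^2=\pi_i$, $\pi_i\pi_j=\pi_j\pi_i$ for $i,j$ non-adjacent mod $N$, and $\pi_i\pi_{i+1}\pi_i=\pi_{i+1}\pi_i\pi_{i+1}$; $\pi_w=\pi_{i_1}\cdots\pi_{i_k}$ for a reduced word $w=s_{i_1}\cdots s_{i_k}$, a bijection with $\tilde S_N$. An affine permutation $x$ is $[321]$-avoiding if there are no integers $a<b<c$ with $x(a)>x(b)>x(c)$. $\operatorname{NDPF}^{(1)}_N$ is the set of $f:\mathbb{Z}\to\mathbb{Z}$ that are regressive ($f(i)\le i$), order preserving and skew periodic ($f(i+N)=f(i)+N$), other than the shifts $i\mapsto i-t$ with $t\ne0$; functions act on the right, so $j.(fg)=(j.f).g$ (apply $f$ first). For $i\in\{0,\dots,N-1\}$, $f_i$ is the function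 with $f_i(j)=j-1$ if $j\equiv i+1\pmod N$ and $f_i(j)=j$ otherwise. *)

From Stdlib Require Import ZArith List Lia.
Import ListNotations.
Open Scope Z_scope.

Definition is_affine_perm (N : nat) (x : Z -> Z) : Prop :=
  (forall a b, x a = x b -> a = b) /\
  (forall y, exists a, x a = y) /\
  (forall i, x (i + Z.of_nat N) = x i + Z.of_nat N) /\
  fold_right Z.add 0 (map (fun k : nat => x (Z.of_nat k)) (seq 1 N))
    = Z.of_nat N * (Z.of_nat N + 1) / 2.

Definition s_gen (N : nat) (i : nat) (j : Z) : Z :=
  if (j mod Z.of_nat N =? Z.of_nat i mod Z.of_nat N) then j + 1
  else if (j mod Z.of_nat N =? (Z.of_nat i + 1) mod Z.of_nat N) then j - 1
  else j.

Definition word_perm (N : nat) (w : list nat) : Z -> Z :=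
  fold_right (fun i f => fun j => s_gen N i (f j)) (fun j => j) w.

Definition valid_word (N : nat) (w : list nat) : Prop :=
  Forall (fun i => (i < N)%nat) w.

Definition represents (N : nat) (w : list nat) (x : Z -> Z) : Prop :=
  valid_word N w /\ forall j, word_perm N w j = x j.

Definition reduced_word (N : nat) (w : list nat) (x : Z -> Z) : Prop :=
  represents N w x /\
  forall w', represents N w' x -> (length w <= length w')%nat.

Definition avoids321 (x : Z -> Z) : Prop :=
  ~ exists a b c, a < b /\ b < c /\ x a > x b /\ x b > x c.

Definition f_gen (N : nat) (i : nat) (j : Z) : Z :=
  if (j mod Z.of_nat N =? (Z.of_nat i + 1) mod Z.of_nat N) then j - 1 else j.

(** The product f_{i1} ... f_{ik} with functions acting on the right:
    j.(f g) = (j.f).g, i.e. f_{i1} is applied first. *)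
Definition f_word (N : nat) (w : list nat) (j : Z) : Z :=
  fold_left (fun acc i => f_gen N i acc) w j.

Definition is_NDPF1 (N : nat) (g : Z -> Z) : Prop :=
  (forall i, g i <= i) /\
  (forall i j, i <= j -> g i <= g j) /\
  (forall i, g (i + Z.of_nat N) = g i + Z.of_nat N) /\
  ~ (exists t, t <> 0 /\ forall i, g i = i - t).

(** x lies in the fiber of g under w |-> P(pi_w): P(pi_w) = f_{i1}...f_{ik}
    for a reduced word s_{i1}...s_{ik} of w. *)
Definition in_fiber (N : nat) (g : Z -> Z) (x : Z -> Z) : Prop :=
  exists w, reduced_word N w x /\ forall j, f_word N w j = g j.

(* Let ell count the affine inversions.  Composing with s_i changes ell by +1 at an ascent
   and by -1 at a descent, so a word is reduced iff every letter is appended at an ascent,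
   and every affine permutation has a reduced word of length ell.  Appending s_i at an
   ascent of x turns "m is the first position with j <= x m" into the same statement for
   x s_i and f_i m; hence for a reduced word of x, P(pi_w)(j) is the first position reached
   by j under x.
   A [321]-avoiding x is determined by this first-reach function: its left-to-right maxima
   and their values are read off from it, and every other entry is smaller than all entries
   to its right.  If two such permutations differed at some non-maximum, one would lie below
   the other at every non-maximum, contradicting equal window sums.
   Conversely, for g in NDPF put the largest preimage of m at every point m of the image of
   g, and fill the other positions increasingly with the remaining values, shifted so that
   the window sum is right.  The filled positions q satisfy g (x q) < q because an affine
   permutation mapping a half-line ]-oo, c] into itself also maps its complement into
   itself; so x has first-reach function g. *)

From Stdlib Require Import ZArith List Lia Permutation IndefiniteDescription Classical
  FunctionalExtensionality.
Import ListNotations.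
Open Scope Z_scope.

Lemma mod_add_lt_neq (n x d : Z) : 0 < d < n -> (x + d) mod n <> x mod n.
Proof.
  intros Hd H. apply Z.cong_iff_ex in H as [k Hk].
  destruct (Z_le_gt_dec k 0); nia.
Qed.

Lemma mod_add_cong (n a b c : Z) : a mod n = b mod n -> (a + c) mod n = (b + c) mod n.
Proof.
  intros H. apply Z.cong_iff_ex in H as [k Hk]. apply Z.cong_iff_ex. exists k. lia.
Qed.

Lemma window_decomp (n c b : Z) : 0 < n -> exists r k, c <= r < c + n /\ b = r + k * n.
Proof.
  intros Hn. exists (c + (b - c) mod n), ((b - c) / n).
  pose proof (Z.mod_pos_bound (b - c) n Hn). pose proof (Z.div_mod (b - c) n ltac:(lia)).
  lia.
Qed.

Lemma shift_mul (n d : Z) (h : Z -> Z) :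
  (forall a, h (a + n) = h a + d) -> forall k a, h (a + k * n) = h a + k * d.
Proof.
  intros H k. induction k using Z.peano_ind; intros a.
  - rewrite !Z.mul_0_l, !Z.add_0_r. reflexivity.
  - replace (a + Z.succ k * n) with (a + k * n + n) by lia. rewrite H, IHk. lia.
  - specialize (H (a + Z.pred k * n)).
    replace (a + Z.pred k * n + n) with (a + k * n) in H by lia. rewrite IHk in H. lia.
Qed.

Lemma shift_mul_bool (n : Z) (p : Z -> bool) :
  (forall a, p (a + n) = p a) -> forall k a, p (a + k * n) = p a.
Proof.
  intros H k. induction k using Z.peano_ind; intros a.
  - rewrite Z.mul_0_l, Z.add_0_r. reflexivity.
  - replace (a + Z.succ k * n) with (a + k * n + n) by lia. rewrite H. apply IHk.
  - rewrite <- (H (a + Z.pred k * n)).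
    replace (a + Z.pred k * n + n) with (a + k * n) by lia. apply IHk.
Qed.

Fixpoint wsum (f : Z -> Z) (c : Z) (n : nat) : Z :=
  match n with O => 0 | S n => f c + wsum f (c + 1) n end.

Lemma wsum_snoc f c n : wsum f c (S n) = wsum f c n + f (c + Z.of_nat n).
Proof.
  revert c; induction n as [|n IH]; intros c; [simpl; rewrite !Z.add_0_r; reflexivity|].
  change (wsum f c (S (S n))) with (f c + wsum f (c + 1) (S n)).
  rewrite IH. change (wsum f c (S n)) with (f c + wsum f (c + 1) n).
  replace (c + 1 + Z.of_nat n) with (c + Z.of_nat (S n)) by lia. lia.
Qed.

Lemma wsum_split2 f c n : (2 <= n)%nat -> wsum f c n = f c + f (c + 1) + wsum f (c + 2) (n - 2).
Proof.
  intros Hn. destruct n as [|[|n]]; [lia|lia|]. simpl.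
  replace (c + 1 + 1) with (c + 2) by lia. rewrite Nat.sub_0_r. lia.
Qed.

Lemma wsum_shift f c n : wsum f (c + 1) n = wsum f c n - f c + f (c + Z.of_nat n).
Proof. pose proof (wsum_snoc f c n). simpl in H. lia. Qed.

Lemma wsum_ext f h c n :
  (forall a, c <= a < c + Z.of_nat n -> f a = h a) -> wsum f c n = wsum h c n.
Proof.
  revert c; induction n as [|n IH]; intros c H; simpl; auto.
  rewrite H, IH by (intros; try apply H; lia). reflexivity.
Qed.

Lemma wsum_add f h c n : wsum (fun a => f a + h a) c n = wsum f c n + wsum h c n.
Proof. revert c; induction n as [|n IH]; intros c; simpl; auto. rewrite IH. lia. Qed.

Lemma wsum_sub f h c n : wsum (fun a => f a - h a) c n = wsum f c n - wsum h c n.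
Proof. revert c; induction n as [|n IH]; intros c; simpl; auto. rewrite IH. lia. Qed.

Lemma wsum_scale k f c n : wsum (fun a => k * f a) c n = k * wsum f c n.
Proof. revert c; induction n as [|n IH]; intros c; simpl; [lia|]. rewrite IH. ring. Qed.

Lemma wsum_const k c n : wsum (fun _ => k) c n = Z.of_nat n * k.
Proof.
  revert c; induction n as [|n IH]; intros c; [reflexivity|].
  change (wsum _ c (S n)) with (k + wsum (fun _ => k) (c + 1) n). rewrite IH. lia.
Qed.

Lemma wsum_nonneg f c n : (forall a, 0 <= f a) -> 0 <= wsum f c n.
Proof.
  revert c; induction n as [|n IH]; intros c H; simpl; [lia|].
  specialize (IH (c + 1) H). specialize (H c). lia.
Qed.

Lemma wsum_le f h c n :
  (forall a, c <= a < c + Z.of_nat n -> f a <= h a) -> wsum f c n <= wsum h c n.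
Proof.
  revert c; induction n as [|n IH]; intros c H; simpl; [lia|].
  assert (wsum f (c + 1) n <= wsum h (c + 1) n) by (apply IH; intros; apply H; lia).
  specialize (H c ltac:(lia)). lia.
Qed.

Lemma wsum_lt f h c n :
  (forall a, c <= a < c + Z.of_nat n -> f a <= h a) ->
  (exists a, c <= a < c + Z.of_nat n /\ f a < h a) -> wsum f c n < wsum h c n.
Proof.
  revert c; induction n as [|n IH]; intros c H [a [Ha Hlt]]; simpl; [lia|].
  destruct (Z.eq_dec a c) as [->|Hne].
  - assert (wsum f (c + 1) n <= wsum h (c + 1) n) by (apply wsum_le; intros; apply H; lia).
    lia.
  - assert (wsum f (c + 1) n < wsum h (c + 1) n).
    { apply IH; [intros; apply H; lia|]. exists a. split; [lia|auto]. }
    specialize (H c ltac:(lia)). lia.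
Qed.

Lemma wsum_le_eq f h c n :
  (forall a, c <= a < c + Z.of_nat n -> f a <= h a) -> wsum f c n = wsum h c n ->
  forall a, c <= a < c + Z.of_nat n -> f a = h a.
Proof.
  intros H E a Ha. destruct (Z.eq_dec (f a) (h a)) as [|Hne]; auto.
  assert (wsum f c n < wsum h c n); [|lia].
  apply wsum_lt; auto. exists a. specialize (H a Ha). split; [auto|lia].
Qed.

Lemma wsum_multiple f m c n :
  (forall a, c <= a < c + Z.of_nat n -> exists k, f a = k * m) -> exists k, wsum f c n = k * m.
Proof.
  revert c; induction n as [|n IH]; intros c H; simpl; [exists 0; lia|].
  destruct (H c ltac:(lia)) as [k1 Hk1]. destruct (IH (c + 1)) as [k2 Hk2].
  { intros; apply H; lia. }
  exists (k1 + k2). lia.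
Qed.

Fixpoint zrange (c : Z) (n : nat) : list Z :=
  match n with O => [] | S n => c :: zrange (c + 1) n end.

Lemma wsum_zrange f c n : wsum f c n = fold_right Z.add 0 (map f (zrange c n)).
Proof. revert c; induction n as [|n IH]; intros c; simpl; auto. rewrite IH. reflexivity. Qed.

Lemma in_zrange c n a : In a (zrange c n) <-> c <= a < c + Z.of_nat n.
Proof. revert c; induction n as [|n IH]; intros c; simpl; [lia|]. rewrite IH. lia. Qed.

Lemma zrange_NoDup c n : NoDup (zrange c n).
Proof.
  revert c; induction n as [|n IH]; intros c; simpl; constructor; auto.
  rewrite in_zrange. lia.
Qed.

Lemma wsum_perm h c n :
  (forall a, c <= a < c + Z.of_nat n -> c <= h a < c + Z.of_nat n) ->
  (forall a b, c <= a < c + Z.of_nat n -> c <= b < c + Z.of_nat n -> h a = h b -> a = b) ->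
  wsum h c n = wsum (fun a => a) c n.
Proof.
  intros Hrange Hinj. rewrite !wsum_zrange, map_id.
  assert (Hperm : Permutation (map h (zrange c n)) (zrange c n)).
  { apply NoDup_Permutation_bis.
    - apply FinFun.Injective_map_NoDup_in; [|apply zrange_NoDup].
      intros a b Ha Hb. apply in_zrange in Ha, Hb. auto.
    - rewrite length_map. lia.
    - intros v Hv. apply in_map_iff in Hv as [a [<- Ha]].
      apply in_zrange in Ha. apply in_zrange. auto. }
  assert (Hsum : forall l l', Permutation l l' -> fold_right Z.add 0 l = fold_right Z.add 0 l')
    by (induction 1; simpl; lia).
  exact (Hsum _ _ Hperm).
Qed.

Lemma wsum_id n : wsum (fun a => a) 1 n = Z.of_nat n * (Z.of_nat n + 1) / 2.
Proof.
  assert (H : 2 * wsum (fun a => a) 1 n = Z.of_nat n * (Z.of_nat n + 1)).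
  { induction n as [|n IH]; [reflexivity|]. rewrite wsum_snoc. lia. }
  rewrite <- H, Z.mul_comm, Z.div_mul; lia.
Qed.

Lemma wsum_seq (x : Z -> Z) m n :
  fold_right Z.add 0 (map (fun k : nat => x (Z.of_nat k)) (seq m n)) = wsum x (Z.of_nat m) n.
Proof.
  revert m; induction n as [|n IH]; intros m; simpl; auto.
  rewrite IH. do 3 f_equal. lia.
Qed.

Section AffinePerm.
Variable N : nat.
Local Notation n := (Z.of_nat N).

Definition periodic (y : Z -> Z) : Prop := forall a, y (a + n) = y a + n.

Lemma periodic_mul y : periodic y -> forall k a, y (a + k * n) = y a + k * n.
Proof. exact (shift_mul n n y). Qed.

Lemma wsum_displacement y c : periodic y ->
  wsum (fun a => y a - a) c N = wsum (fun a => y a - a) 0 N.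
Proof.
  intros Hp. induction c as [|c IH|c IH] using Z.peano_ind; auto.
  - rewrite <- Z.add_1_r, wsum_shift, Hp, <- IH. lia.
  - rewrite <- IH. replace c with (Z.pred c + 1) at 2 by lia. rewrite wsum_shift, Hp. lia.
Qed.

Lemma wsum_id_iff y c c' : periodic y ->
  wsum y c N = wsum (fun a => a) c N <-> wsum y c' N = wsum (fun a => a) c' N.
Proof.
  intros Hp. pose proof (wsum_displacement y c Hp). pose proof (wsum_displacement y c' Hp).
  rewrite !wsum_sub in *. lia.
Qed.

Lemma affine_perm_wsum x c : is_affine_perm N x -> wsum x c N = wsum (fun a => a) c N.
Proof.
  intros (_ & _ & Hp & Hsum). apply (wsum_id_iff x 1 c Hp).
  rewrite wsum_seq in Hsum. rewrite wsum_id. exact Hsum.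
Qed.

Lemma affine_perm_of_wsum x c :
  (forall a b, x a = x b -> a = b) -> (forall y, exists a, x a = y) -> periodic x ->
  wsum x c N = wsum (fun a => a) c N -> is_affine_perm N x.
Proof.
  intros Hinj Hsurj Hp Hsum. repeat split; auto.
  rewrite wsum_seq, <- wsum_id. apply (wsum_id_iff x c 1 Hp). exact Hsum.
Qed.

Hypothesis HN : (1 <= N)%nat.

Definition lift_residue (c v : Z) : Z := c + 1 + (v - c - 1) mod n.

Lemma lift_residue_range c v : c < lift_residue c v <= c + n.
Proof. unfold lift_residue. pose proof (Z.mod_pos_bound (v - c - 1) n ltac:(lia)). lia. Qed.

Lemma lift_residue_cong c v : v = lift_residue c v + (v - c - 1) / n * n.
Proof. unfold lift_residue. pose proof (Z.div_mod (v - c - 1) n ltac:(lia)). lia. Qed.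

Lemma le_lift_residue c v : v <= c + n -> v <= lift_residue c v.
Proof.
  intros Hv. pose proof (lift_residue_range c v). pose proof (lift_residue_cong c v).
  assert ((v - c - 1) / n <= 0) by nia. nia.
Qed.

Lemma lift_residue_le c v : c < v -> lift_residue c v <= v.
Proof.
  intros Hv. pose proof (lift_residue_range c v). pose proof (lift_residue_cong c v).
  assert (0 <= (v - c - 1) / n) by nia. nia.
Qed.

Lemma wsum_lift_residue x c : (forall a b, x a = x b -> a = b) -> periodic x ->
  wsum (fun a => lift_residue c (x a)) (c + 1) N = wsum (fun a => a) (c + 1) N.
Proof.
  intros Hinj Hp. apply wsum_perm.
  - intros a _. pose proof (lift_residue_range c (x a)). lia.
  - intros a b Ha Hb E.
    pose proof (lift_residue_cong c (x a)) as Ea. pose proof (lift_residue_cong c (x b)) as Eb.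
    set (k := (x a - c - 1) / n - (x b - c - 1) / n).
    assert (Hk : x a = x (b + k * n)) by (rewrite periodic_mul by auto; unfold k; lia).
    apply Hinj in Hk. assert (k = 0) by nia. lia.
Qed.

Lemma wsum_cong_id x : (forall a b, x a = x b -> a = b) -> periodic x ->
  exists k, wsum x 1 N = wsum (fun a => a) 1 N + k * n.
Proof.
  intros Hinj Hp. pose proof (wsum_lift_residue x 0 Hinj Hp) as E.
  destruct (wsum_multiple (fun a => x a - lift_residue 0 (x a)) n 1 N) as [k Hk].
  { intros a _. exists ((x a - 0 - 1) / n). pose proof (lift_residue_cong 0 (x a)). lia. }
  exists k. rewrite wsum_sub in Hk. simpl in E. lia.
Qed.

Lemma affine_perm_window_range x c : is_affine_perm N x ->
  (forall a, c < a <= c + n -> x a <= c + n) \/ (forall a, c < a <= c + n -> c < x a) ->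
  forall a, c < a <= c + n -> c < x a <= c + n.
Proof.
  intros Hx Hside a Ha.
  pose proof Hx as (Hinj & _ & Hp & _).
  assert (Hsum : wsum x (c + 1) N = wsum (fun a => lift_residue c (x a)) (c + 1) N).
  { rewrite wsum_lift_residue by auto. apply affine_perm_wsum; auto. }
  assert (Hfix : x a = lift_residue c (x a)).
  { destruct Hside as [Hup|Hlow].
    - apply (wsum_le_eq x (fun b => lift_residue c (x b)) (c + 1) N); auto; [|lia].
      intros b Hb. apply le_lift_residue, Hup. lia.
    - symmetry. apply (wsum_le_eq (fun b => lift_residue c (x b)) x (c + 1) N); auto; [|lia].
      intros b Hb. apply lift_residue_le, Hlow. lia. }
  rewrite Hfix. apply lift_residue_range.
Qed.

Lemma affine_perm_up_closed x c : is_affine_perm N x ->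
  (forall a, a <= c -> x a <= c) -> forall b, c < b -> c < x b.
Proof.
  intros Hx Hdown b Hb. pose proof Hx as (_ & _ & Hp & _).
  assert (W : forall a, c - n < a <= c -> c - n < x a).
  { intros a Ha. apply (affine_perm_window_range x (c - n)); auto; [|lia].
    left. intros a' Ha'. specialize (Hdown a' ltac:(lia)). lia. }
  destruct (window_decomp n (c - n + 1) b) as [r [k [Hr ->]]]; [lia|].
  rewrite periodic_mul by auto. specialize (W r ltac:(lia)). assert (1 <= k) by nia. nia.
Qed.

Lemma affine_perm_down_closed x c : is_affine_perm N x ->
  (forall b, c < b -> c < x b) -> forall a, a <= c -> x a <= c.
Proof.
  intros Hx Hup a Ha. pose proof Hx as (_ & _ & Hp & _).
  assert (W : forall b, c < b <= c + n -> x b <= c + n).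
  { intros b Hb. apply (affine_perm_window_range x c); auto.
    right. intros b' Hb'. apply Hup. lia. }
  destruct (window_decomp n (c + 1) a) as [r [k [Hr ->]]]; [lia|].
  rewrite periodic_mul by auto. specialize (W r ltac:(lia)). assert (k <= -1) by nia. nia.
Qed.

End AffinePerm.

Section Generators.
Variable N : nat.
Local Notation n := (Z.of_nat N).

Lemma s_gen_cong i j : j mod n = Z.of_nat i mod n -> s_gen N i j = j + 1.
Proof. intros H. unfold s_gen. rewrite H, Z.eqb_refl. reflexivity. Qed.

Lemma s_gen_other i j : j mod n <> Z.of_nat i mod n -> j mod n <> (Z.of_nat i + 1) mod n ->
  s_gen N i j = j.
Proof.
  intros H1 H2. unfold s_gen.
  destruct (Z.eqb_spec (j mod n) (Z.of_nat i mod n)) as [E1|_]; [contradiction|].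
  destruct (Z.eqb_spec (j mod n) ((Z.of_nat i + 1) mod n)) as [E2|_]; [contradiction|reflexivity].
Qed.

Lemma s_gen_at i : s_gen N i (Z.of_nat i) = Z.of_nat i + 1.
Proof. apply s_gen_cong. reflexivity. Qed.

Lemma s_gen_le_succ i a : s_gen N i a <= a + 1.
Proof. unfold s_gen. destruct (_ =? _); [lia|]. destruct (_ =? _); lia. Qed.

Lemma s_gen_succ_cong i a : s_gen N i a = a + 1 -> a mod n = Z.of_nat i mod n.
Proof.
  unfold s_gen. destruct (Z.eqb_spec (a mod n) (Z.of_nat i mod n)); auto.
  destruct (_ =? _); lia.
Qed.

Lemma word_perm_snoc w i j : word_perm N (w ++ [i]) j = word_perm N w (s_gen N i j).
Proof. induction w as [|a w IH]; simpl; [reflexivity|]. rewrite IH. reflexivity. Qed.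

Lemma word_perm_snoc_fun w i : word_perm N (w ++ [i]) = fun j => word_perm N w (s_gen N i j).
Proof. apply functional_extensionality. apply word_perm_snoc. Qed.

Lemma f_word_snoc w i j : f_word N (w ++ [i]) j = f_gen N i (f_word N w j).
Proof. unfold f_word. rewrite fold_left_app. reflexivity. Qed.

Hypothesis HN : (1 <= N)%nat.

Lemma s_gen_periodic i : periodic N (s_gen N i).
Proof.
  intros j. unfold s_gen.
  replace ((j + n) mod n) with (j mod n) by (rewrite <- (Z.mod_add j 1) by lia; f_equal; lia).
  destruct (_ =? _); [lia|]. destruct (_ =? _); lia.
Qed.

Lemma periodic_comp_s_gen y i : periodic N y -> periodic N (fun a => y (s_gen N i a)).
Proof. intros Hp a. rewrite s_gen_periodic. apply Hp. Qed.

Lemma word_perm_periodic w : periodic N (word_perm N w).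
Proof.
  intros j. induction w as [|a w IH]; simpl; [reflexivity|].
  rewrite IH. apply s_gen_periodic.
Qed.

End Generators.

Section Involution.
Variable N : nat.
Hypothesis HN : (2 <= N)%nat.
Local Notation n := (Z.of_nat N).

Lemma s_gen_cong_succ i j : j mod n = (Z.of_nat i + 1) mod n -> s_gen N i j = j - 1.
Proof.
  intros H. unfold s_gen. rewrite H, Z.eqb_refl.
  destruct (Z.eqb_spec ((Z.of_nat i + 1) mod n) (Z.of_nat i mod n)) as [E|]; auto.
  exfalso. apply (mod_add_lt_neq n (Z.of_nat i) 1); [lia|exact E].
Qed.

Lemma s_gen_at_succ i : s_gen N i (Z.of_nat i + 1) = Z.of_nat i.
Proof. rewrite s_gen_cong_succ; [lia|reflexivity]. Qed.

Lemma s_gen_fixed i a : Z.of_nat i + 2 <= a < Z.of_nat i + n -> s_gen N i a = a.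
Proof.
  intros Ha. apply s_gen_other.
  - replace a with (Z.of_nat i + (a - Z.of_nat i)) by lia. apply mod_add_lt_neq. lia.
  - replace a with (Z.of_nat i + 1 + (a - Z.of_nat i - 1)) by lia. apply mod_add_lt_neq. lia.
Qed.

Lemma s_gen_involutive i j : s_gen N i (s_gen N i j) = j.
Proof.
  destruct (Z.eq_dec (j mod n) (Z.of_nat i mod n)) as [E1|E1].
  - rewrite (s_gen_cong N i j) by auto. rewrite s_gen_cong_succ; [lia|].
    apply mod_add_cong. exact E1.
  - destruct (Z.eq_dec (j mod n) ((Z.of_nat i + 1) mod n)) as [E2|E2].
    + rewrite (s_gen_cong_succ i j) by auto. rewrite s_gen_cong; [lia|].
      apply (mod_add_cong n _ _ (-1)) in E2.
      replace (j + -1) with (j - 1) in E2 by lia.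
      replace (Z.of_nat i + 1 + -1) with (Z.of_nat i) in E2 by lia. exact E2.
    + rewrite !(s_gen_other N i j) by auto. reflexivity.
Qed.

Lemma s_gen_inj i a b : s_gen N i a = s_gen N i b -> a = b.
Proof.
  intros H. rewrite <- (s_gen_involutive i a), <- (s_gen_involutive i b), H. reflexivity.
Qed.

Lemma wsum_comp_s_gen f i :
  wsum (fun a => f (s_gen N i a)) (Z.of_nat i) N = wsum f (Z.of_nat i) N.
Proof.
  rewrite !(wsum_split2 _ _ N) by auto.
  rewrite s_gen_at, s_gen_at_succ.
  rewrite (wsum_ext (fun a => f (s_gen N i a)) f); [lia|].
  intros a Ha. rewrite s_gen_fixed; [reflexivity|lia].
Qed.

Lemma affine_perm_comp_s_gen x i : is_affine_perm N x ->
  is_affine_perm N (fun a => x (s_gen N i a)).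
Proof.
  intros Hx. pose proof Hx as (Hinj & Hsurj & Hp & _).
  apply (affine_perm_of_wsum N _ (Z.of_nat i)).
  - intros a b E. apply Hinj, s_gen_inj in E. exact E.
  - intros y. destruct (Hsurj y) as [a Ha]. exists (s_gen N i a).
    rewrite s_gen_involutive. exact Ha.
  - apply periodic_comp_s_gen; [lia|exact Hp].
  - rewrite wsum_comp_s_gen. apply affine_perm_wsum. exact Hx.
Qed.

Lemma word_perm_inj w a b : word_perm N w a = word_perm N w b -> a = b.
Proof. induction w as [|c w IH]; simpl; auto. intros H. apply s_gen_inj in H. auto. Qed.

End Involution.

Section Length.
Variable N : nat.
Hypothesis HN : (1 <= N)%nat.
Local Notation n := (Z.of_nat N).

(** For periodic [y], [inv_count y a b] is the number of [k] with [a < b + k n] and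
    [y a > y (b + k n)]; summed over a window it counts the inversions of [y], so [ell] is
    the Coxeter length on affine permutations. *)
Definition inv_count (y : Z -> Z) (a b : Z) : Z :=
  Z.max 0 ((y a - y b - 1) / n - (a - b) / n).

Definition inv_window_sum (y : Z -> Z) (c : Z) : Z :=
  wsum (fun a => wsum (inv_count y a) c N) c N.

Definition ell (y : Z -> Z) : Z := inv_window_sum y 0.

Lemma div_add_n x : (x + n) / n = x / n + 1.
Proof. rewrite <- (Z.div_add x 1) by lia. f_equal. lia. Qed.

Lemma inv_count_periodic_l y a b : periodic N y -> inv_count y (a + n) b = inv_count y a b.
Proof.
  intros Hp. unfold inv_count. rewrite Hp.
  replace (y a + n - y b - 1) with (y a - y b - 1 + n) by lia.
  replace (a + n - b) with (a - b + n) by lia.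
  rewrite !div_add_n. f_equal. lia.
Qed.

Lemma inv_count_periodic_r y a b : periodic N y -> inv_count y a (b + n) = inv_count y a b.
Proof.
  intros Hp. unfold inv_count. rewrite Hp.
  replace (y a - y b - 1) with (y a - (y b + n) - 1 + n) by lia.
  replace (a - b) with (a - (b + n) + n) by lia.
  rewrite !div_add_n. f_equal. lia.
Qed.

Lemma inv_window_sum_succ y c : periodic N y -> inv_window_sum y (c + 1) = inv_window_sum y c.
Proof.
  intros Hp. unfold inv_window_sum.
  rewrite (wsum_ext _ (fun a => wsum (inv_count y a) c N)).
  2: { intros a _. rewrite wsum_shift, inv_count_periodic_r by auto. lia. }
  rewrite wsum_shift.
  rewrite (wsum_ext (inv_count y (c + n)) (inv_count y c)); [lia|].
  intros b _. apply inv_count_periodic_l. exact Hp.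
Qed.

Lemma inv_window_sum_ell y c : periodic N y -> inv_window_sum y c = ell y.
Proof.
  intros Hp. unfold ell. induction c as [|c IH|c IH] using Z.peano_ind; auto.
  - rewrite <- Z.add_1_r, inv_window_sum_succ; auto.
  - rewrite <- IH, <- (inv_window_sum_succ y (Z.pred c)) by auto. f_equal. lia.
Qed.

Lemma ell_nonneg y : 0 <= ell y.
Proof.
  apply wsum_nonneg. intros a. apply wsum_nonneg. intros b. apply Z.le_max_l.
Qed.

Lemma ell_id : ell (fun j => j) = 0.
Proof.
  unfold ell, inv_window_sum.
  rewrite (wsum_ext _ (fun _ => 0)); [rewrite wsum_const; lia|].
  intros a _. rewrite (wsum_ext _ (fun _ => 0)); [rewrite wsum_const; lia|].
  intros b _. unfold inv_count.
  assert ((a - b - 1) / n <= (a - b) / n) by (apply Z.div_le_mono; lia). lia.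
Qed.

Lemma inv_count_diag y a : inv_count y a a = 0.
Proof.
  unfold inv_count. rewrite (Z.sub_diag a), Z.div_0_l by lia.
  assert ((y a - y a - 1) / n < 0) by (apply Z.div_lt_upper_bound; lia). lia.
Qed.

End Length.

Lemma wsum2_split2 (F : Z -> Z -> Z) c m : (2 <= m)%nat ->
  wsum (fun a => wsum (F a) c m) c m
  = F c c + F c (c + 1) + F (c + 1) c + F (c + 1) (c + 1)
    + wsum (F c) (c + 2) (m - 2) + wsum (F (c + 1)) (c + 2) (m - 2)
    + wsum (fun a => F a c) (c + 2) (m - 2) + wsum (fun a => F a (c + 1)) (c + 2) (m - 2)
    + wsum (fun a => wsum (F a) (c + 2) (m - 2)) (c + 2) (m - 2).
Proof.
  intros Hm. rewrite !(wsum_split2 _ c m Hm).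
  rewrite (wsum_ext (fun a => wsum (F a) c m)
                    (fun a => F a c + F a (c + 1) + wsum (F a) (c + 2) (m - 2))).
  - rewrite !wsum_add. lia.
  - intros a _. apply wsum_split2. exact Hm.
Qed.

Lemma pair_inv_count_diff (m d : Z) : 0 < m -> d <> 0 ->
  Z.max 0 ((d - 1) / m + 1) + Z.max 0 ((- d - 1) / m)
  - (Z.max 0 ((- d - 1) / m + 1) + Z.max 0 ((d - 1) / m)) = if 0 <? d then 1 else -1.
Proof.
  intros Hm Hd. destruct (Z.ltb_spec 0 d).
  - assert (0 <= (d - 1) / m) by (apply Z.div_pos; lia).
    assert ((- d - 1) / m < 0) by (apply Z.div_lt_upper_bound; lia). lia.
  - assert ((d - 1) / m < 0) by (apply Z.div_lt_upper_bound; lia).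
    assert (0 <= (- d - 1) / m) by (apply Z.div_pos; lia). lia.
Qed.

Section AscentStep.
Variable N : nat.
Hypothesis HN : (2 <= N)%nat.
Variables (y : Z -> Z) (i : nat).
Hypothesis Hy : periodic N y.
Local Notation n := (Z.of_nat N).
Local Notation u := (Z.of_nat i).
Local Notation y' := (fun a => y (s_gen N i a)).

Lemma inv_count_s_gen_far a b : u + 2 <= a < u + n -> u + 2 <= b < u + n ->
  inv_count N y' a b = inv_count N y a b.
Proof. intros Ha Hb. unfold inv_count. rewrite !(s_gen_fixed N HN i) by auto. reflexivity. Qed.

Lemma inv_count_s_gen_row b : u + 2 <= b < u + n ->
  inv_count N y' u b = inv_count N y (u + 1) b /\ inv_count N y' (u + 1) b = inv_count N y u b.
Proof.
  intros Hb. unfold inv_count.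
  rewrite s_gen_at, s_gen_at_succ, (s_gen_fixed N HN i b) by auto.
  assert (E1 : (u - b) / n = -1) by (symmetry; apply Z.div_unique with (u - b + n); lia).
  assert (E2 : (u + 1 - b) / n = -1) by (symmetry; apply Z.div_unique with (u + 1 - b + n); lia).
  rewrite E1, E2. split; reflexivity.
Qed.

Lemma inv_count_s_gen_col a : u + 2 <= a < u + n ->
  inv_count N y' a u = inv_count N y a (u + 1) /\ inv_count N y' a (u + 1) = inv_count N y a u.
Proof.
  intros Ha. unfold inv_count.
  rewrite s_gen_at, s_gen_at_succ, (s_gen_fixed N HN i a) by auto.
  rewrite (Z.div_small (a - u)), (Z.div_small (a - (u + 1))) by lia. split; reflexivity.
Qed.

Lemma ell_s_gen_diff :
  ell N y' - ell N y
  = inv_count N y' u (u + 1) + inv_count N y' (u + 1) u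
    - (inv_count N y u (u + 1) + inv_count N y (u + 1) u).
Proof.
  rewrite <- (inv_window_sum_ell N ltac:(lia) y' u), <- (inv_window_sum_ell N ltac:(lia) y u)
    by (try apply periodic_comp_s_gen; auto; lia).
  unfold inv_window_sum.
  rewrite wsum2_split2 by auto. rewrite (wsum2_split2 (inv_count N y)) by auto.
  rewrite !inv_count_diag by lia.
  rewrite (wsum_ext (inv_count N y' u) (inv_count N y (u + 1)))
    by (intros b Hb; apply inv_count_s_gen_row; lia).
  rewrite (wsum_ext (inv_count N y' (u + 1)) (inv_count N y u))
    by (intros b Hb; apply inv_count_s_gen_row; lia).
  rewrite (wsum_ext (fun a => inv_count N y' a u) (fun a => inv_count N y a (u + 1)))
    by (intros a Ha; apply inv_count_s_gen_col; lia).
  rewrite (wsum_ext (fun a => inv_count N y' a (u + 1)) (fun a => inv_count N y a u))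
    by (intros a Ha; apply inv_count_s_gen_col; lia).
  rewrite (wsum_ext (fun a => wsum (inv_count N y' a) (u + 2) (N - 2))
                    (fun a => wsum (inv_count N y a) (u + 2) (N - 2))).
  - lia.
  - intros a Ha. apply wsum_ext. intros b Hb. apply inv_count_s_gen_far; lia.
Qed.

Lemma ell_s_gen : y u <> y (u + 1) ->
  ell N y' = ell N y + (if y u <? y (u + 1) then 1 else -1).
Proof.
  intros Hne. pose proof ell_s_gen_diff as Hdiff. unfold inv_count in Hdiff.
  rewrite s_gen_at, s_gen_at_succ in Hdiff by auto.
  replace (u - (u + 1)) with (-1) in Hdiff by lia. replace (u + 1 - u) with 1 in Hdiff by lia.
  rewrite (Z.div_small 1) in Hdiff by lia.
  replace (-1 / n) with (-1) in Hdiff by (apply Z.div_unique with (n - 1); lia).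
  pose proof (pair_inv_count_diff n (y (u + 1) - y u) ltac:(lia) ltac:(lia)) as Hpair.
  replace (- (y (u + 1) - y u) - 1) with (y u - y (u + 1) - 1) in Hpair by lia.
  replace (0 <? y (u + 1) - y u) with (y u <? y (u + 1)) in Hpair
    by (destruct (Z.ltb_spec (y u) (y (u + 1))), (Z.ltb_spec 0 (y (u + 1) - y u)); lia).
  lia.
Qed.

End AscentStep.

Lemma increment_eq_of_le (h : Z -> Z) d p : 1 <= p ->
  (forall j, h j + d <= h (j + 1)) -> (forall j, h (j + p) = h j + p * d) ->
  forall j, h (j + 1) = h j + d.
Proof.
  intros Hp Hle Hper j.
  assert (Hmany : forall k : nat, forall a, h a + Z.of_nat k * d <= h (a + Z.of_nat k)).
  { induction k as [|k IH]; intros a; [rewrite !Z.add_0_r; lia|].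
    specialize (IH (a + 1)). specialize (Hle a).
    replace (a + Z.of_nat (S k)) with (a + 1 + Z.of_nat k) by lia. nia. }
  specialize (Hmany (Z.to_nat (p - 1)) (j + 1)). rewrite Z2Nat.id in Hmany by lia.
  replace (j + 1 + (p - 1)) with (j + p) in Hmany by lia. rewrite Hper in Hmany.
  specialize (Hle j). nia.
Qed.

Section ReducedWords.
Variable N : nat.
Hypothesis HN : (2 <= N)%nat.
Local Notation n := (Z.of_nat N).

Lemma ell_word_le_length w : ell N (word_perm N w) <= Z.of_nat (length w).
Proof.
  induction w as [|i w IH] using rev_ind.
  - apply Z.eq_le_incl, ell_id. lia.
  - rewrite word_perm_snoc_fun, ell_s_gen, length_app; auto.
    + simpl. destruct (_ <? _); lia.
    + apply word_perm_periodic. lia.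
    + intros E. apply word_perm_inj in E; lia.
Qed.

Lemma affine_perm_no_descent_id x : is_affine_perm N x ->
  (forall i, (i < N)%nat -> x (Z.of_nat i) <= x (Z.of_nat i + 1)) -> forall j, x j = j.
Proof.
  intros Hx Hasc. pose proof Hx as (Hinj & _ & Hp & _).
  assert (Hle : forall j, x j + 1 <= x (j + 1)).
  { intros j. destruct (window_decomp n 0 j) as [r [k [Hr ->]]]; [lia|].
    replace (r + k * n + 1) with (r + 1 + k * n) by lia.
    rewrite !(periodic_mul N x Hp).
    specialize (Hasc (Z.to_nat r) ltac:(lia)). rewrite Z2Nat.id in Hasc by lia.
    assert (x r <> x (r + 1)) by (intros E; apply Hinj in E; lia). lia. }
  assert (Hunit : forall j, x (j + 1) = x j + 1).
  { apply (increment_eq_of_le x 1 n); [lia|exact Hle|]. intros j. rewrite Hp. lia. }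
  assert (Hshift : forall j, x j = j + x 0).
  { intros j. pose proof (shift_mul 1 1 x Hunit j 0) as Hlin.
    replace (0 + j * 1) with j in Hlin by lia. lia. }
  pose proof (affine_perm_wsum N x 1 Hx) as Hsum.
  rewrite (wsum_ext x (fun a => a + x 0)), wsum_add, wsum_const in Hsum by auto.
  intros j. rewrite Hshift. nia.
Qed.

Lemma affine_perm_reduced_word x : is_affine_perm N x ->
  exists w, valid_word N w /\ (forall j, word_perm N w j = x j) /\
            Z.of_nat (length w) = ell N x.
Proof.
  intros Hx. remember (Z.to_nat (ell N x)) as k eqn:Hk.
  revert x Hx Hk. induction k as [k IH] using lt_wf_ind; intros x Hx Hk.
  destruct (classic (exists i, (i < N)%nat /\ x (Z.of_nat i + 1) < x (Z.of_nat i)))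
    as [[i [Hi Hdesc]]|Hnone].
  - pose proof Hx as (_ & _ & Hp & _).
    set (x' := fun a => x (s_gen N i a)).
    assert (Hell : ell N x' = ell N x - 1).
    { unfold x'. rewrite ell_s_gen by (exact Hp || lia).
      destruct (Z.ltb_spec (x (Z.of_nat i)) (x (Z.of_nat i + 1))); lia. }
    pose proof (ell_nonneg N x').
    destruct (IH (Z.to_nat (ell N x')) ltac:(lia) x') as [w [Hv [Hw Hlen]]];
      [apply affine_perm_comp_s_gen; auto | reflexivity |].
    exists (w ++ [i]). split; [|split].
    + apply Forall_app. split; [exact Hv|]. constructor; [exact Hi|constructor].
    + intros j. rewrite word_perm_snoc, Hw. unfold x'. rewrite s_gen_involutive; auto.
    + rewrite length_app. simpl. lia.
  - assert (Hid : forall j, x j = j).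
    { apply affine_perm_no_descent_id; auto. intros i Hi.
      apply Z.nlt_ge. intros Hlt. apply Hnone. exists i. split; auto. }
    exists []. split; [constructor|split].
    + intros j. rewrite Hid. reflexivity.
    + replace x with (fun j : Z => j) by (apply functional_extensionality; auto).
      rewrite ell_id by lia. reflexivity.
Qed.

Lemma reduced_word_iff w x : is_affine_perm N x ->
  reduced_word N w x <-> represents N w x /\ Z.of_nat (length w) = ell N x.
Proof.
  intros Hx.
  assert (Hlow : forall w', represents N w' x -> ell N x <= Z.of_nat (length w')).
  { intros w' [_ Hw']. replace x with (word_perm N w')
      by (apply functional_extensionality; auto).
    apply ell_word_le_length. }
  destruct (affine_perm_reduced_word x Hx) as [w0 [Hv0 [Hw0 Hlen0]]].
  split.
  - intros [Hrep Hmin]. split; [exact Hrep|].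
    specialize (Hmin w0 (conj Hv0 Hw0)). specialize (Hlow w Hrep). lia.
  - intros [Hrep Hlen]. split; [exact Hrep|]. intros w' Hrep'. specialize (Hlow w' Hrep'). lia.
Qed.

End ReducedWords.

Definition first_reach (x : Z -> Z) (j m : Z) : Prop :=
  j <= x m /\ forall a, a < m -> x a < j.

Lemma first_reach_unique x j m m' : first_reach x j m -> first_reach x j m' -> m = m'.
Proof.
  intros [H1 H2] [H3 H4]. destruct (Z.lt_total m m') as [H|[H|H]]; auto.
  - specialize (H4 m H). lia.
  - specialize (H2 m' H). lia.
Qed.

Section FiberStep.
Variable N : nat.
Hypothesis HN : (2 <= N)%nat.
Local Notation n := (Z.of_nat N).

Lemma first_reach_s_gen y i j m : periodic N y -> y (Z.of_nat i) < y (Z.of_nat i + 1) ->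
  first_reach y j m -> first_reach (fun a => y (s_gen N i a)) j (f_gen N i m).
Proof.
  intros Hp Hasc [Hm Hbelow].
  assert (Hasc_cong : forall k, k mod n = Z.of_nat i mod n -> y k < y (k + 1)).
  { intros k Hk. apply Z.cong_iff_ex in Hk as [t Ht].
    replace k with (Z.of_nat i + t * n) by lia.
    replace (Z.of_nat i + t * n + 1) with (Z.of_nat i + 1 + t * n) by lia.
    rewrite !(periodic_mul N y Hp). lia. }
  unfold f_gen. destruct (Z.eqb_spec (m mod n) ((Z.of_nat i + 1) mod n)) as [E1|E1].
  - assert (Hs : s_gen N i (m - 1) = m).
    { rewrite s_gen_cong; [lia|]. apply (mod_add_cong n _ _ (-1)) in E1.
      replace (m + -1) with (m - 1) in E1 by lia.
      replace (Z.of_nat i + 1 + -1) with (Z.of_nat i) in E1 by lia. exact E1. }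
    split; [rewrite Hs; exact Hm|].
    intros a Ha. apply Hbelow. pose proof (s_gen_le_succ N i a). lia.
  - split.
    + destruct (Z.eq_dec (m mod n) (Z.of_nat i mod n)) as [E2|E2].
      * rewrite s_gen_cong by auto. specialize (Hasc_cong m E2). lia.
      * rewrite s_gen_other by auto. exact Hm.
    + intros a Ha. apply Hbelow. pose proof (s_gen_le_succ N i a).
      destruct (Z.eq_dec (s_gen N i a) m) as [Es|]; [|lia].
      exfalso. apply E1. rewrite <- Es.
      assert (Ea : s_gen N i a = a + 1) by lia.
      rewrite Ea. apply mod_add_cong, s_gen_succ_cong, Ea.
Qed.

Lemma f_word_first_reach w : Z.of_nat (length w) = ell N (word_perm N w) ->
  forall j, first_reach (word_perm N w) j (f_word N w j).
Proof.
  induction w as [|i w IH] using rev_ind; intros Hlen j.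
  - split; [simpl; lia|]. intros a Ha. exact Ha.
  - assert (Hp : periodic N (word_perm N w)) by (apply word_perm_periodic; lia).
    assert (Hne : word_perm N w (Z.of_nat i) <> word_perm N w (Z.of_nat i + 1))
      by (intros E; apply word_perm_inj in E; lia).
    pose proof (ell_word_le_length N HN w).
    rewrite word_perm_snoc_fun, ell_s_gen, length_app in Hlen by auto. simpl in Hlen.
    destruct (Z.ltb_spec (word_perm N w (Z.of_nat i)) (word_perm N w (Z.of_nat i + 1)))
      as [Hasc|]; [|lia].
    rewrite word_perm_snoc_fun, f_word_snoc.
    apply first_reach_s_gen; auto. apply IH. lia.
Qed.

End FiberStep.

Definition lr_max (x : Z -> Z) (m : Z) : Prop := forall a, a < m -> x a < x m.

Lemma lr_max_first_reach x y G m :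
  (forall j, first_reach x j (G j)) -> (forall j, first_reach y j (G j)) ->
  lr_max x m -> x m <= y m /\ lr_max y m.
Proof.
  intros Gx Gy Hm.
  assert (HG : G (x m) = m).
  { apply (first_reach_unique x (x m)); [apply Gx|]. split; [lia|exact Hm]. }
  destruct (Gy (x m)) as [Hle Hbelow]. rewrite HG in Hle, Hbelow.
  split; [exact Hle|]. intros a Ha. specialize (Hbelow a Ha). lia.
Qed.

Lemma avoids321_not_lr_max_lt x a b : avoids321 x -> (forall a b, x a = x b -> a = b) ->
  ~ lr_max x a -> a < b -> x a < x b.
Proof.
  intros Hav Hinj Ha Hab. apply NNPP. intros Hge.
  assert (Hlt : x b < x a) by (assert (x a <> x b) by (intros E; apply Hinj in E; lia); lia).
  apply Ha. intros c Hc. apply NNPP. intros Hc'.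
  assert (x c > x a) by (assert (x c <> x a) by (intros E; apply Hinj in E; lia); lia).
  apply Hav. exists c, a, b. lia.
Qed.

Lemma not_lr_max_shift N x p k : periodic N x ->
  ~ lr_max x p -> ~ lr_max x (p + k * Z.of_nat N).
Proof.
  intros Hp Hnot Hmax. apply Hnot. intros a Ha.
  specialize (Hmax (a + k * Z.of_nat N) ltac:(lia)).
  rewrite !(periodic_mul N x Hp) in Hmax. lia.
Qed.

Lemma lr_max_agree x y G m :
  (forall j, first_reach x j (G j)) -> (forall j, first_reach y j (G j)) ->
  lr_max x m -> x m = y m.
Proof.
  intros Gx Gy Hm. destruct (lr_max_first_reach x y G m Gx Gy Hm) as [H1 H2].
  destruct (lr_max_first_reach y x G m Gy Gx H2). lia.
Qed.

Lemma not_lr_max_transfer x y G m :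
  (forall j, first_reach x j (G j)) -> (forall j, first_reach y j (G j)) ->
  ~ lr_max x m -> ~ lr_max y m.
Proof. intros Gx Gy Hx' Hy'. apply Hx'. apply (lr_max_first_reach y x G m Gy Gx Hy'). Qed.

Section Uniqueness.
Variable N : nat.
Local Notation n := (Z.of_nat N).
Variables (x y G : Z -> Z).
Hypotheses (Hx : is_affine_perm N x) (Hy : is_affine_perm N y).
Hypotheses (Ax : avoids321 x) (Ay : avoids321 y).
Hypotheses (Gx : forall j, first_reach x j (G j)) (Gy : forall j, first_reach y j (G j)).

(** The value [y q] sits at a non-maximum [r > q] of [x] with [x r = y q < y r]; iterating
    this step, [x < y] persists at every later non-maximum. *)
Lemma no_crossing : forall d : nat, forall q p, (Z.to_nat (p - q) <= d)%nat -> q < p ->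
  ~ lr_max x q -> ~ lr_max x p -> x q < y q -> y p <= x p -> False.
Proof.
  pose proof Hx as (Ix & Sx & _). pose proof Hy as (Iy & _).
  induction d as [|d IH]; intros q p Hd Hqp Hq Hp Hxy Hyx; [lia|].
  pose proof (not_lr_max_transfer x y G q Gx Gy Hq) as Hq_y.
  destruct (Sx (y q)) as [r Hr].
  assert (Hr_not : ~ lr_max x r).
  { intros Hmax. pose proof (lr_max_agree x y G r Gx Gy Hmax) as E. rewrite Hr in E.
    apply Iy in E. subst r. contradiction. }
  assert (Hqr : q < r).
  { destruct (Z.lt_total q r) as [H|[H|H]]; [exact H|subst r; lia|].
    pose proof (avoids321_not_lr_max_lt x r q Ax Ix Hr_not H). lia. }
  pose proof (avoids321_not_lr_max_lt y q r Ay Iy Hq_y Hqr).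
  pose proof (avoids321_not_lr_max_lt y q p Ay Iy Hq_y Hqp).
  destruct (Z.lt_total p r) as [Hpr|[Hpr|Hpr]].
  - pose proof (avoids321_not_lr_max_lt x p r Ax Ix Hp Hpr). lia.
  - subst r. lia.
  - apply (IH r p); auto; lia.
Qed.

Hypothesis HN : (1 <= N)%nat.

Lemma not_lr_max_lt_spread q : ~ lr_max x q -> x q < y q ->
  forall p, ~ lr_max x p -> x p < y p.
Proof.
  intros Hq Hxy p Hp. pose proof Hx as (_ & _ & Px & _). pose proof Hy as (_ & _ & Py & _).
  set (k := Z.abs (q - p) + 1).
  assert (Hk : q < p + k * n) by (unfold k; nia).
  destruct (Z_lt_le_dec (x (p + k * n)) (y (p + k * n))) as [Hlt|Hge].
  - rewrite (periodic_mul N x Px), (periodic_mul N y Py) in Hlt. lia.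
  - exfalso. apply (no_crossing (Z.to_nat (p + k * n - q)) q (p + k * n)); auto.
    apply not_lr_max_shift; auto.
Qed.

Lemma not_lr_max_not_lt q : ~ lr_max x q -> ~ x q < y q.
Proof.
  intros Hq Hxy. pose proof Hx as (_ & _ & Px & _).
  destruct (window_decomp n 1 q) as [r [k [Hr Hqr]]]; [lia|].
  assert (Hr_not : ~ lr_max x r).
  { replace r with (q + - k * n) by lia. apply not_lr_max_shift; auto. }
  assert (Hsum : wsum x 1 N < wsum y 1 N).
  2: { rewrite (affine_perm_wsum N x 1 Hx), (affine_perm_wsum N y 1 Hy) in Hsum. lia. }
  apply wsum_lt.
  - intros a _. destruct (classic (lr_max x a)) as [Hl|Hl].
    + rewrite (lr_max_agree x y G a Gx Gy Hl). lia.
    + pose proof (not_lr_max_lt_spread q Hq Hxy a Hl). lia.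
  - exists r. split; [lia|]. apply (not_lr_max_lt_spread q); auto.
Qed.

End Uniqueness.

Lemma avoids321_first_reach_unique N x y G : (1 <= N)%nat ->
  is_affine_perm N x -> is_affine_perm N y -> avoids321 x -> avoids321 y ->
  (forall j, first_reach x j (G j)) -> (forall j, first_reach y j (G j)) ->
  forall j, x j = y j.
Proof.
  intros HN Hx Hy Ax Ay Gx Gy j.
  destruct (classic (lr_max x j)) as [Hmax|Hnot].
  - apply (lr_max_agree x y G j Gx Gy Hmax).
  - pose proof (not_lr_max_not_lt N x y G Hx Hy Ax Ay Gx Gy HN j Hnot).
    pose proof (not_lr_max_not_lt N y x G Hy Hx Ay Ax Gy Gx HN j
                  (not_lr_max_transfer x y G j Gx Gy Hnot)).
    lia.
Qed.

Lemma discrete_ivt (h : Z -> Z) m lo hi : lo < hi -> h lo <= m -> m < h hi ->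
  exists t, lo <= t < hi /\ h t <= m < h (t + 1).
Proof.
  intros Hlt. remember (Z.to_nat (hi - lo)) as d eqn:Hd. revert lo Hlt Hd.
  induction d as [|d IH]; intros lo Hlt Hd Hlo Hhi; [lia|].
  destruct (Z_lt_le_dec m (h (lo + 1))) as [H|H]; [exists lo; lia|].
  destruct (Z.eq_dec (lo + 1) hi) as [E|E]; [subst hi; lia|].
  destruct (IH (lo + 1)) as [t Ht]; [lia|lia|exact H|exact Hhi|].
  exists t. lia.
Qed.

Definition unit_steps (h : Z -> Z) : Prop := forall a, h a = h (a - 1) \/ h a = h (a - 1) + 1.

Lemma unit_steps_mono h : unit_steps h -> forall a b, a <= b -> h a <= h b.
Proof.
  intros Hs a b Hab. replace b with (a + Z.of_nat (Z.to_nat (b - a))) by lia.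
  induction (Z.to_nat (b - a)) as [|d IH]; [rewrite Z.add_0_r; lia|].
  specialize (Hs (a + Z.of_nat (S d))).
  replace (a + Z.of_nat (S d) - 1) with (a + Z.of_nat d) in Hs by lia. lia.
Qed.

Lemma unit_steps_hit (n k : Z) h : 0 < n -> 1 <= k -> unit_steps h ->
  (forall a, h (a + n) = h a + k) -> forall t, exists v, h v = t /\ h (v - 1) = t - 1.
Proof.
  intros Hn Hk Hs Hp t.
  set (K := Z.abs (t - h 0) + 1).
  pose proof (shift_mul n k h Hp K 0) as Eup. pose proof (shift_mul n k h Hp (- K) 0) as Edown.
  simpl in Eup, Edown.
  destruct (discrete_ivt h (t - 1) (- K * n) (K * n)) as [s [Hs1 Hs2]];
    [unfold K; nia|rewrite Edown; unfold K; nia|rewrite Eup; unfold K; nia|].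
  exists (s + 1). replace (s + 1 - 1) with s by lia.
  specialize (Hs (s + 1)). replace (s + 1 - 1) with s in Hs by lia. lia.
Qed.

Definition count_in (p : Z -> bool) (c : Z) (k : nat) : Z :=
  wsum (fun a => if p a then 1 else 0) c k.

Section Counting.
Variable N : nat.
Hypothesis HN : (1 <= N)%nat.
Local Notation n := (Z.of_nat N).
Variable p : Z -> bool.
Hypothesis Hp : forall a, p (a + n) = p a.

Definition count_upto (a : Z) : Z :=
  count_in p 1 N * (a / n) + count_in p 1 (Z.to_nat (a mod n)).

Lemma count_upto_step a : count_upto a = count_upto (a - 1) + (if p a then 1 else 0).
Proof.
  unfold count_upto.
  pose proof (Z.div_mod (a - 1) n ltac:(lia)) as Hdm.
  pose proof (Z.mod_pos_bound (a - 1) n ltac:(lia)) as Hb.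
  set (q := (a - 1) / n) in *. set (r := (a - 1) mod n) in *.
  assert (Hpa : p a = p (1 + r)).
  { replace a with (1 + r + q * n) by lia. apply shift_mul_bool. exact Hp. }
  assert (Hsnoc : count_in p 1 (S (Z.to_nat r))
                  = count_in p 1 (Z.to_nat r) + (if p a then 1 else 0)).
  { unfold count_in. rewrite wsum_snoc, Z2Nat.id, Hpa by lia. reflexivity. }
  destruct (Z.eq_dec (r + 1) n) as [E|E].
  - rewrite <- (Z.div_unique a n (q + 1) 0), <- (Z.mod_unique a n (q + 1) 0) by lia.
    replace (count_in p 1 N) with (count_in p 1 (S (Z.to_nat r))) by (f_equal; lia).
    rewrite Hsnoc. change (count_in p 1 (Z.to_nat 0)) with 0. ring.
  - rewrite <- (Z.div_unique a n q (r + 1)), <- (Z.mod_unique a n q (r + 1)) by lia.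
    replace (Z.to_nat (r + 1)) with (S (Z.to_nat r)) by lia. rewrite Hsnoc. lia.
Qed.

Lemma count_upto_periodic a : count_upto (a + n) = count_upto a + count_in p 1 N.
Proof.
  unfold count_upto. replace (a + n) with (a + 1 * n) by lia.
  rewrite Z.div_add, Z.mod_add by lia. ring.
Qed.

End Counting.

Section Construction.
Variable N : nat.
Hypothesis HN : (1 <= N)%nat.
Local Notation n := (Z.of_nat N).
Variable g : Z -> Z.
Hypothesis g_le : forall i, g i <= i.
Hypothesis g_mono : forall i j, i <= j -> g i <= g j.
Hypothesis g_per : periodic N g.
Variable ginv : Z -> Z.
Hypothesis ginv_spec : forall m, g (ginv m) <= m < g (ginv m + 1).

Lemma g_le_iff j m : g j <= m <-> j <= ginv m.
Proof.
  pose proof (ginv_spec m). split; intros Hj.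
  - apply Z.nlt_ge. intros Hlt. pose proof (g_mono (ginv m + 1) j ltac:(lia)). lia.
  - pose proof (g_mono j (ginv m) Hj). lia.
Qed.

Lemma le_ginv m : m <= ginv m.
Proof. apply g_le_iff, g_le. Qed.

Lemma ginv_mono m m' : m <= m' -> ginv m <= ginv m'.
Proof. intros H. apply g_le_iff. pose proof (ginv_spec m). lia. Qed.

Lemma ginv_not_flat m : g (ginv m + 1) <> g (ginv m).
Proof. pose proof (ginv_spec m). lia. Qed.

Lemma ginv_periodic : periodic N ginv.
Proof.
  intros m. apply Z.le_antisymm.
  - apply Z.nlt_ge. intros Hlt. pose proof (ginv_spec (m + n)) as H.
    pose proof (g_mono (ginv m + n + 1) (ginv (m + n)) ltac:(lia)).
    pose proof (ginv_spec m).
    replace (ginv m + n + 1) with (ginv m + 1 + n) in * by lia. rewrite g_per in *. lia.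
  - apply g_le_iff. rewrite g_per. pose proof (ginv_spec m). lia.
Qed.

Definition in_image (m : Z) : bool := g (ginv m) =? m.

Lemma in_image_spec m : in_image m = true <-> g (ginv m) = m.
Proof. apply Z.eqb_eq. Qed.

Lemma in_image_g j : in_image (g j) = true.
Proof.
  apply in_image_spec. pose proof (ginv_spec (g j)).
  pose proof (g_mono _ _ (proj1 (g_le_iff j (g j)) (Z.le_refl _))). lia.
Qed.

Lemma in_image_periodic m : in_image (m + n) = in_image m.
Proof.
  unfold in_image. rewrite ginv_periodic, g_per.
  destruct (Z.eqb_spec (g (ginv m)) m) as [E1|E1], (Z.eqb_spec (g (ginv m) + n) (m + n)) as [E2|E2];
    lia.
Qed.

Lemma all_image_shift : (forall m, in_image m = true) -> forall j, g j = j + g 0.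
Proof.
  intros Hall.
  assert (Hstep : forall j, g (j + 1) <= g j + 1).
  { intros j. set (m := g j + 1). pose proof (proj1 (in_image_spec m) (Hall m)) as Hm.
    destruct (Z_le_gt_dec (ginv m) j) as [Hle|Hgt].
    - pose proof (g_mono _ _ Hle). lia.
    - pose proof (g_mono (j + 1) (ginv m) ltac:(lia)). lia. }
  assert (Hunit : forall j, g (j + 1) = g j + 1).
  { intros j. pose proof (increment_eq_of_le (fun a => a - g a) 0 n ltac:(lia)) as Hinc.
    simpl in Hinc. assert (g j <= g (j + 1)) by (apply g_mono; lia).
    enough (j + 1 - g (j + 1) = j - g j + 0) by lia.
    apply Hinc; [intros a; specialize (Hstep a); lia|]. intros a. rewrite g_per. lia. }
  intros j. pose proof (shift_mul 1 1 g Hunit j 0) as Hlin.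
  replace (0 + j * 1) with j in Hlin by lia. lia.
Qed.

(** [flat_rank] increases exactly at the [v] with [g (v + 1) = g v], because a jump of [g]
    at [v] passes exactly one point of the image, namely [g (v + 1)]. *)
Definition gap_rank (a : Z) : Z := a - count_upto N in_image a.
Definition flat_rank (v : Z) : Z := v - count_upto N in_image (g (v + 1)).
Definition gap_density : Z := n - count_in in_image 1 N.

Lemma count_image_flat a b : a <= b -> (forall m, a < m <= b -> in_image m = false) ->
  count_upto N in_image b = count_upto N in_image a.
Proof.
  intros Hab. replace b with (a + Z.of_nat (Z.to_nat (b - a))) by lia.
  induction (Z.to_nat (b - a)) as [|d IH]; intros Hnone; [rewrite Z.add_0_r; reflexivity|].
  rewrite count_upto_step by (auto; apply in_image_periodic).
  rewrite Hnone by lia. replace (a + Z.of_nat (S d) - 1) with (a + Z.of_nat d) by lia.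
  rewrite IH by (intros; apply Hnone; lia). lia.
Qed.

Lemma count_image_jump v : g v < g (v + 1) ->
  count_upto N in_image (g (v + 1)) = count_upto N in_image (g v) + 1.
Proof.
  intros Hlt. rewrite count_upto_step, in_image_g by (auto; apply in_image_periodic).
  rewrite (count_image_flat (g v)); [lia|lia|].
  intros m Hm. destruct (in_image m) eqn:E; auto. exfalso. apply in_image_spec in E.
  destruct (Z_le_gt_dec (v + 1) (ginv m)) as [Hle|Hgt].
  - pose proof (g_mono _ _ Hle). lia.
  - pose proof (g_mono (ginv m) v ltac:(lia)). lia.
Qed.

Lemma gap_rank_step a : gap_rank a = gap_rank (a - 1) + (if in_image a then 0 else 1).
Proof.
  unfold gap_rank. rewrite count_upto_step by (auto; apply in_image_periodic).
  destruct (in_image a); lia.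
Qed.

Lemma flat_rank_step v : flat_rank v = flat_rank (v - 1) + (if g (v + 1) =? g v then 1 else 0).
Proof.
  unfold flat_rank. replace (v - 1 + 1) with v by lia.
  destruct (Z.eqb_spec (g (v + 1)) (g v)) as [E|E].
  - rewrite E. lia.
  - rewrite count_image_jump; [lia|]. pose proof (g_mono v (v + 1) ltac:(lia)). lia.
Qed.

Lemma gap_rank_unit_steps : unit_steps gap_rank.
Proof. intros a. rewrite gap_rank_step. destruct (in_image a); lia. Qed.

Lemma flat_rank_unit_steps : unit_steps flat_rank.
Proof. intros v. rewrite flat_rank_step. destruct (_ =? _); lia. Qed.

Lemma gap_rank_periodic a : gap_rank (a + n) = gap_rank a + gap_density.
Proof.
  unfold gap_rank, gap_density. rewrite count_upto_periodic by (auto; apply in_image_periodic).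
  lia.
Qed.

Lemma flat_rank_periodic v : flat_rank (v + n) = flat_rank v + gap_density.
Proof.
  unfold flat_rank, gap_density. replace (v + n + 1) with (v + 1 + n) by lia.
  rewrite g_per, count_upto_periodic by (auto; apply in_image_periodic). lia.
Qed.

Lemma gap_rank_lt a q : in_image q = false -> a < q -> gap_rank a < gap_rank q.
Proof.
  intros Hq Ha. pose proof (gap_rank_step q) as E. rewrite Hq in E.
  pose proof (unit_steps_mono _ gap_rank_unit_steps a (q - 1) ltac:(lia)). lia.
Qed.

Lemma flat_rank_lt v v' : g (v' + 1) = g v' -> v < v' -> flat_rank v < flat_rank v'.
Proof.
  intros Hv Ha. pose proof (flat_rank_step v') as E. rewrite Hv, Z.eqb_refl in E.
  pose proof (unit_steps_mono _ flat_rank_unit_steps v (v' - 1) ltac:(lia)). lia.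
Qed.

Lemma gap_rank_inj a b : in_image a = false -> in_image b = false ->
  gap_rank a = gap_rank b -> a = b.
Proof.
  intros Ha Hb E. destruct (Z.lt_total a b) as [H|[H|H]]; auto.
  - pose proof (gap_rank_lt a b Hb H). lia.
  - pose proof (gap_rank_lt b a Ha H). lia.
Qed.

Lemma flat_rank_inj v v' : g (v + 1) = g v -> g (v' + 1) = g v' ->
  flat_rank v = flat_rank v' -> v = v'.
Proof.
  intros Hv Hv' E. destruct (Z.lt_total v v') as [H|[H|H]]; auto.
  - pose proof (flat_rank_lt v v' Hv' H). lia.
  - pose proof (flat_rank_lt v' v Hv H). lia.
Qed.

Hypothesis Hgap : exists q, in_image q = false.

Lemma gap_density_pos : 1 <= gap_density.
Proof.
  destruct Hgap as [q Hq]. pose proof (gap_rank_step q) as E. rewrite Hq in E.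
  pose proof (gap_rank_periodic (q - 1)).
  pose proof (unit_steps_mono _ gap_rank_unit_steps q (q - 1 + n) ltac:(lia)). lia.
Qed.

Lemma flat_rank_hit t : exists v, g (v + 1) = g v /\ flat_rank v = t.
Proof.
  destruct (unit_steps_hit n gap_density flat_rank ltac:(lia) gap_density_pos
              flat_rank_unit_steps flat_rank_periodic t) as [v [H1 H2]].
  exists v. split; [|exact H1].
  pose proof (flat_rank_step v). destruct (Z.eqb_spec (g (v + 1)) (g v)); lia.
Qed.

Lemma gap_rank_hit t : exists q, in_image q = false /\ gap_rank q = t.
Proof.
  destruct (unit_steps_hit n gap_density gap_rank ltac:(lia) gap_density_pos
              gap_rank_unit_steps gap_rank_periodic t) as [q [H1 H2]].
  exists q. split; [|exact H1].
  pose proof (gap_rank_step q). destruct (in_image q); [lia|reflexivity].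
Qed.

Section Candidate.
Variable flat_at : Z -> Z.
Hypothesis flat_at_spec : forall t, g (flat_at t + 1) = g (flat_at t) /\ flat_rank (flat_at t) = t.

Definition cand (s a : Z) : Z := if in_image a then ginv a else flat_at (gap_rank a + s).

Lemma cand_image s a : in_image a = true -> cand s a = ginv a.
Proof. intros H. unfold cand. rewrite H. reflexivity. Qed.

Lemma cand_gap s a : in_image a = false ->
  g (cand s a + 1) = g (cand s a) /\ flat_rank (cand s a) = gap_rank a + s.
Proof. intros H. unfold cand. rewrite H. apply flat_at_spec. Qed.

Lemma cand_inj s a b : cand s a = cand s b -> a = b.
Proof.
  intros E. destruct (in_image a) eqn:Ha, (in_image b) eqn:Hb.
  - rewrite !cand_image in E by auto. apply in_image_spec in Ha, Hb. congruence.
  - rewrite cand_image in E by auto. destruct (cand_gap s b Hb) as [Hflat _].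
    rewrite <- E in Hflat. exfalso. exact (ginv_not_flat a Hflat).
  - rewrite (cand_image s b) in E by auto. destruct (cand_gap s a Ha) as [Hflat _].
    rewrite E in Hflat. exfalso. exact (ginv_not_flat b Hflat).
  - destruct (cand_gap s a Ha) as [_ Ra]. destruct (cand_gap s b Hb) as [_ Rb].
    rewrite E in Ra. apply gap_rank_inj; auto. lia.
Qed.

Lemma cand_surj s v : exists a, cand s a = v.
Proof.
  destruct (Z.eq_dec (g (v + 1)) (g v)) as [Hflat|Hjump].
  - destruct (gap_rank_hit (flat_rank v - s)) as [q [Hq Rq]]. exists q.
    destruct (cand_gap s q Hq) as [Hflat' R']. apply flat_rank_inj; auto. lia.
  - exists (g v). rewrite cand_image by apply in_image_g.
    assert (v <= ginv (g v)) by (apply g_le_iff; lia).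
    assert (ginv (g v) <= v); [|lia].
    apply Z.nlt_ge. intros Hlt. pose proof (g_mono (v + 1) (ginv (g v)) ltac:(lia)).
    pose proof (ginv_spec (g v)). pose proof (g_mono v (v + 1) ltac:(lia)). lia.
Qed.

Lemma cand_periodic s : periodic N (cand s).
Proof.
  intros a. destruct (in_image a) eqn:Ha.
  - rewrite !cand_image; [apply ginv_periodic|auto|]. rewrite in_image_periodic. exact Ha.
  - assert (Ha' : in_image (a + n) = false) by (rewrite in_image_periodic; exact Ha).
    destruct (cand_gap s a Ha) as [F R]. destruct (cand_gap s _ Ha') as [F' R'].
    apply flat_rank_inj; auto.
    + replace (cand s a + n + 1) with (cand s a + 1 + n) by lia. rewrite !g_per. lia.
    + rewrite flat_rank_periodic, R', gap_rank_periodic. lia.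
Qed.

Lemma cand_gap_lt s a b : in_image a = false -> in_image b = false -> a < b ->
  cand s a < cand s b.
Proof.
  intros Ha Hb Hab. destruct (cand_gap s a Ha) as [_ Ra]. destruct (cand_gap s b Hb) as [_ Rb].
  pose proof (gap_rank_lt a b Hb Hab). apply Z.nle_gt. intros Hle.
  pose proof (unit_steps_mono _ flat_rank_unit_steps _ _ Hle). lia.
Qed.

Lemma cand_image_lt s a b : in_image a = true -> in_image b = true -> a < b ->
  cand s a < cand s b.
Proof.
  intros Ha Hb Hab. rewrite !cand_image by auto. pose proof (ginv_mono a b ltac:(lia)).
  assert (ginv a <> ginv b); [|lia].
  intros E. apply in_image_spec in Ha, Hb. rewrite E in Ha. lia.
Qed.

Lemma cand_avoids321 s : avoids321 (cand s).
Proof.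
  assert (Hclass : forall a b, a < b -> in_image a = in_image b -> cand s a < cand s b).
  { intros a b Hab E. destruct (in_image b) eqn:Hb.
    - apply cand_image_lt; auto.
    - apply cand_gap_lt; auto. }
  intros (a & b & c & Hab & Hbc & H1 & H2).
  destruct (in_image a) eqn:Ea, (in_image b) eqn:Eb, (in_image c) eqn:Ec;
    first [ pose proof (Hclass a b Hab ltac:(congruence)); lia
          | pose proof (Hclass b c Hbc ltac:(congruence)); lia
          | pose proof (Hclass a c ltac:(lia) ltac:(congruence)); lia ].
Qed.

Lemma cand_lt_succ s a : in_image a = false -> cand s a < cand (s + 1) a.
Proof.
  intros Ha. destruct (cand_gap s a Ha) as [_ R1]. destruct (cand_gap (s + 1) a Ha) as [_ R2].
  apply Z.nle_gt. intros Hle. pose proof (unit_steps_mono _ flat_rank_unit_steps _ _ Hle). lia.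
Qed.

Lemma cand_shift_density s a : in_image a = false -> cand (s + gap_density) a = cand s a + n.
Proof.
  intros Ha. destruct (cand_gap s a Ha) as [F1 R1].
  destruct (cand_gap (s + gap_density) a Ha) as [F2 R2].
  apply flat_rank_inj; auto.
  - replace (cand s a + n + 1) with (cand s a + 1 + n) by lia. rewrite !g_per. lia.
  - rewrite flat_rank_periodic. lia.
Qed.

Definition cand_sum (s : Z) : Z := wsum (cand s) 1 N.

Lemma cand_sum_lt_succ s : cand_sum s < cand_sum (s + 1).
Proof.
  unfold cand_sum. apply wsum_lt.
  - intros a _. destruct (in_image a) eqn:Ha.
    + rewrite !cand_image by auto. lia.
    + pose proof (cand_lt_succ s a Ha). lia.
  - destruct Hgap as [q Hq]. destruct (window_decomp n 1 q) as [r [k [Hr ->]]]; [lia|].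
    exists r. split; [exact Hr|]. apply cand_lt_succ.
    rewrite <- Hq. symmetry. apply shift_mul_bool, in_image_periodic.
Qed.

Lemma cand_sum_shift_density s : cand_sum (s + gap_density) = cand_sum s + gap_density * n.
Proof.
  unfold cand_sum.
  rewrite (wsum_ext (cand (s + gap_density))
             (fun a => cand s a + (n - n * (if in_image a then 1 else 0)))).
  - rewrite wsum_add, wsum_sub, wsum_const, wsum_scale. unfold gap_density, count_in. ring.
  - intros a _. destruct (in_image a) eqn:Ha.
    + rewrite !cand_image by auto. lia.
    + rewrite cand_shift_density by auto. lia.
Qed.

Lemma cand_sum_succ s : cand_sum (s + 1) = cand_sum s + n.
Proof.
  apply (increment_eq_of_le cand_sum n gap_density gap_density_pos).
  - intros t. pose proof (cand_sum_lt_succ t).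
    destruct (wsum_cong_id N HN (cand t) (cand_inj t) (cand_periodic t)) as [k1 H1].
    destruct (wsum_cong_id N HN (cand (t + 1)) (cand_inj (t + 1)) (cand_periodic (t + 1)))
      as [k2 H2].
    unfold cand_sum in *. assert (k1 < k2) by nia. nia.
  - intros t. rewrite cand_sum_shift_density. ring.
Qed.

Lemma cand_sum_balanced : exists s, cand_sum s = wsum (fun a => a) 1 N.
Proof.
  destruct (wsum_cong_id N HN (cand 0) (cand_inj 0) (cand_periodic 0)) as [k Hk].
  exists (- k). pose proof (shift_mul 1 n cand_sum cand_sum_succ (- k) 0) as Hlin.
  replace (0 + - k * 1) with (- k) in Hlin by lia. unfold cand_sum in *. lia.
Qed.

Lemma cand_affine s : cand_sum s = wsum (fun a => a) 1 N -> is_affine_perm N (cand s).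
Proof.
  intros Hs. apply (affine_perm_of_wsum N _ 1).
  - apply cand_inj.
  - apply cand_surj.
  - apply cand_periodic.
  - exact Hs.
Qed.

(** Otherwise [cand s] would map one of the half-lines [(-oo, q - 1]], [(q - 1, +oo)] into
    itself but not the other, which no affine permutation does. *)
Lemma cand_gap_below s q : is_affine_perm N (cand s) -> in_image q = false ->
  g (cand s q) < q.
Proof.
  intros Hx Hq. destruct (Z_lt_le_dec (cand s q) q) as [Hlt|Hge].
  - apply Z.nle_gt. intros Hreach.
    assert (Hdown : forall a, a <= q - 1 -> cand s a <= q - 1).
    { intros a Ha. destruct (in_image a) eqn:Ea.
      - rewrite cand_image by auto. apply Z.nlt_ge. intros Hbig.
        pose proof (g_mono (cand s q) (ginv a) ltac:(lia)). pose proof (ginv_spec a). lia.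
      - pose proof (cand_gap_lt s a q Ea Hq ltac:(lia)). lia. }
    pose proof (affine_perm_up_closed N HN (cand s) (q - 1) Hx Hdown q ltac:(lia)). lia.
  - exfalso.
    assert (Hup : forall b, q - 1 < b -> q - 1 < cand s b).
    { intros b Hb. destruct (in_image b) eqn:Eb.
      - rewrite cand_image by auto. pose proof (le_ginv b). lia.
      - destruct (Z.eq_dec b q) as [->|Hne]; [lia|].
        pose proof (cand_gap_lt s q b Hq Eb ltac:(lia)). lia. }
    assert (Hgq : g q < q).
    { pose proof (g_le q). enough (g q <> q) by lia. intros E.
      rewrite <- E, in_image_g in Hq. discriminate. }
    pose proof (affine_perm_down_closed N HN (cand s) (q - 1) Hx Hup (g q) ltac:(lia)) as H.
    rewrite cand_image in H by apply in_image_g.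
    assert (q <= ginv (g q)) by (apply g_le_iff; lia). lia.
Qed.

Lemma cand_first_reach s : is_affine_perm N (cand s) -> forall j, first_reach (cand s) j (g j).
Proof.
  intros Hx j. split.
  - rewrite cand_image by apply in_image_g. apply g_le_iff. lia.
  - intros a Ha. apply Z.nle_gt. intros Hle. pose proof (g_mono _ _ Hle).
    destruct (in_image a) eqn:Ea.
    + rewrite cand_image in * by auto. pose proof (ginv_spec a). lia.
    + pose proof (cand_gap_below s a Hx Ea). lia.
Qed.

Lemma cand_solution :
  exists x, is_affine_perm N x /\ avoids321 x /\ forall j, first_reach x j (g j).
Proof.
  destruct cand_sum_balanced as [s Hs]. pose proof (cand_affine s Hs) as Hx.
  exists (cand s). split; [exact Hx|split].
  - apply cand_avoids321.
  - apply cand_first_reach. exact Hx.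
Qed.

End Candidate.

Lemma gap_case_solution :
  exists x, is_affine_perm N x /\ avoids321 x /\ forall j, first_reach x j (g j).
Proof.
  destruct (functional_choice _ flat_rank_hit) as [flat_at flat_at_spec].
  exact (cand_solution flat_at flat_at_spec).
Qed.

End Construction.

Lemma NDPF1_ginv_exists N g : (1 <= N)%nat -> is_NDPF1 N g ->
  forall m, exists t, g t <= m < g (t + 1).
Proof.
  intros HN (g_le & _ & g_per & _) m.
  pose proof (periodic_mul N g g_per (m - g m + 1) m) as Hfar.
  destruct (discrete_ivt g m m (m + (m - g m + 1) * Z.of_nat N)) as [t [_ Ht]];
    [pose proof (g_le m); nia | apply g_le | rewrite Hfar; pose proof (g_le m); nia |].
  exists t. exact Ht.
Qed.

Lemma NDPF1_all_image_id N g ginv : (1 <= N)%nat -> is_NDPF1 N g ->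
  (forall m, in_image g ginv m = true) -> forall j, g j = j.
Proof.
  intros HN (_ & g_mono & g_per & g_not_shift) Hall.
  pose proof (all_image_shift N HN g g_mono g_per ginv Hall) as Hshift.
  destruct (Z.eq_dec (g 0) 0) as [E|E].
  - intros j. rewrite Hshift, E. lia.
  - exfalso. apply g_not_shift. exists (- g 0). split; [lia|]. intros i. rewrite Hshift. lia.
Qed.

Lemma NDPF1_avoids321_first_reach N g : (1 <= N)%nat -> is_NDPF1 N g ->
  exists x, is_affine_perm N x /\ avoids321 x /\ forall j, first_reach x j (g j).
Proof.
  intros HN Hg. pose proof Hg as (g_le & g_mono & g_per & _).
  destruct (functional_choice _ (NDPF1_ginv_exists N g HN Hg)) as [ginv ginv_spec].
  destruct (classic (exists q, in_image g ginv q = false)) as [Hgap|Hno_gap].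
  - exact (gap_case_solution N HN g g_le g_mono g_per ginv ginv_spec Hgap).
  - assert (Hid : forall j, g j = j).
    { apply (NDPF1_all_image_id N g ginv HN Hg). intros m.
      destruct (in_image g ginv m) eqn:E; [reflexivity|].
      exfalso. apply Hno_gap. exists m. exact E. }
    exists (fun j => j). split; [|split].
    + apply (affine_perm_of_wsum N _ 1); [auto| |intros a; reflexivity|reflexivity].
      intros y. exists y. reflexivity.
    + intros (a & b & c & ?). lia.
    + intros j. rewrite Hid. split; [lia|]. intros a Ha. exact Ha.
Qed.

Theorem mainTheorem5 (N : nat) (HN : (3 <= N)%nat) (g : Z -> Z) :
  is_NDPF1 N g ->
  exists x : Z -> Z,
    is_affine_perm N x /\ avoids321 x /\ in_fiber N g x /\
    forall y : Z -> Z,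
      is_affine_perm N y -> avoids321 y -> in_fiber N g y ->
      forall j, y j = x j.
Proof.
  intros Hg.
  destruct (NDPF1_avoids321_first_reach N g ltac:(lia) Hg) as (x & Hx & Ax & Gx).
  exists x. split; [exact Hx|split; [exact Ax|split]].
  - destruct (affine_perm_reduced_word N ltac:(lia) x Hx) as (w & Hv & Hw & Hlen).
    assert (Ew : word_perm N w = x) by (apply functional_extensionality; exact Hw).
    exists w. split.
    + apply reduced_word_iff; [lia|exact Hx|]. split; [split; assumption|exact Hlen].
    + intros j. apply (first_reach_unique x j).
      * rewrite <- Ew. apply f_word_first_reach; [lia|]. rewrite Ew. exact Hlen.
      * apply Gx.
  - intros y Hy Ay [w [Hred Hfw]].
    apply reduced_word_iff in Hred as [[_ Hw] Hlen]; [|lia|exact Hy].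
    assert (Ew : word_perm N w = y) by (apply functional_extensionality; exact Hw).
    apply (avoids321_first_reach_unique N y x g ltac:(lia) Hy Hx Ay Ax); [|exact Gx].
    intros j. rewrite <- Hfw, <- Ew. apply f_word_first_reach; [lia|]. rewrite Ew. exact Hlen.
Qed.
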